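(* Let $\mathcal C$ be a nondegenerate conic section in the (complex or real) projective plane, equipped with a rational parametrization, i.e. a birational bijection $\mathbb{P}^1\to\mathcal C$; for a point of $\mathcal C$ denoted by a capital letter, the corresponding lowercase letter denotes its parameter value. (1) Let the broken lines $X_1X_2X_3X_4$ and $Y_1Y_2Y_3Y_4$ be inscribed in $\mathcal C$. Then the intersection points $A_j=X_jX_{j+1}\cap Y_jY_{j+1}$, $j=1,2,3$, are collinear if and only if \[ (x_1,y_2,x_3,y_4)=(y_1,x_2,y_3,x_4). \] (2) Let the broken lines $Y_2Y_1UX_1X_2$ and $PVQ$ be inscribed in $\mathcal C$. Then the points \[ A=X_1X_2\cap Y_1Y_2,\quad B=UX_1\cap PV,\quad C=UY_1\cap QV \] are collinear if and only if \[ (p,u,q,x_2,y_1,v,x_1,y_2)=1. \]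
   Context: The cross-ratio is $(a,b,c,d)=\frac{a-b}{b-c}\cdot\frac{c-d}{d-a}$. More generally, the multi-ratio of an even number of arguments is $(a_1,a_2,\dots,a_{2k})=\prod_{i=1}^{k}\frac{a_{2i-1}-a_{2i}}{a_{2i}-a_{2i+1}}$ with $a_{2k+1}=a_1$, i.e. $(a,b,\dots,c,d)=\frac{a-b}{b-\cdots}\cdots\frac{c-d}{d-a}$. $PQ$ denotes the line through $P$ and $Q$; the points are assumed to be in general position so that all lines and intersections are defined. *)

From mathcomp Require Import all_boot all_order all_algebra.
Set Implicit Arguments. Unset Strict Implicit. Unset Printing Implicit Defensive.
Import Order.TTheory GRing.Theory Num.Theory.
Local Open Scope ring_scope.

(* Points of P^1 are homogeneous pairs (s,t) (parameter s/t,
   (1,0) = infinity); points and lines of P^2 are nonzero row vectors of F^3. *)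
Section Defs.
Variable F : fieldType.

(* homogeneous version of the difference a - b of parameters *)
Definition det2 (a b : F * F) : F := a.1 * b.2 - a.2 * b.1.

(* multi-ratio (a_1,...,a_2k) = prod_i (a_{2i-1}-a_{2i})/(a_{2i}-a_{2i+1}), a_{2k+1}=a_1 *)
Definition multiratio (s : seq (F * F)) : F :=
  \prod_(i < (size s)./2)
     (det2 (nth (0,0) s i.*2) (nth (0,0) s i.*2.+1)
      / det2 (nth (0,0) s i.*2.+1) (nth (0,0) s (i.*2.+2 %% size s))).

Definition P1_distinct (s : seq (F * F)) : Prop :=
  forall i j : nat, (i < j < size s)%N -> det2 (nth (0,0) s i) (nth (0,0) s j) != 0.

Definition veronese (a : F * F) : 'rV[F]_3 :=
  \row_(i < 3) (a.1 ^+ (2 - i) * a.2 ^+ i).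

(* The rational parametrization of a nondegenerate conic: every birational
   bijection P^1 -> C onto a nondegenerate conic is a ~> veronese a *m M with M
   invertible. *)
Definition conic_param (M : 'M[F]_3) (a : F * F) : 'rV[F]_3 := veronese a *m M.

Definition coord (u : 'rV[F]_3) (i : nat) : F := u 0 (inord i).

Definition cross (u w : 'rV[F]_3) : 'rV[F]_3 :=
  \row_(i < 3) (coord u (i.+1 %% 3) * coord w (i.+2 %% 3)
                - coord u (i.+2 %% 3) * coord w (i.+1 %% 3)).

Definition join (P Q : 'rV[F]_3) : 'rV[F]_3 := cross P Q.
Definition meet (l m : 'rV[F]_3) : 'rV[F]_3 := cross l m.

Definition collinear (A B C : 'rV[F]_3) : Prop :=
  \det (col_mx A (col_mx B C) : 'M_3) = 0.

End Defs.

(* Joins and meets are cross products, cross (u *m M) (w *m M) = cross u w *m (\adj M)^T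
   and \adj (\adj M) = \det M *: M in dimension 3.  Hence every intersection of two
   chords of the conic is, up to a nonzero scalar, the image under M of the same
   intersection for the standard conic (s^2 : st : t^2), and M multiplies the
   determinant expressing collinearity by \det M.  On the standard conic the triple
   product of the three intersection points factors into 2x2 determinants of parameters:
   one factor is nonzero by distinctness, the other is the cross-multiplied difference
   of the two sides of the multi-ratio identity. *)

From mathcomp Require Import all_boot all_order all_algebra ring.
Import GRing.Theory.
Set Implicit Arguments.
Unset Strict Implicit.
Unset Printing Implicit Defensive.
Local Open Scope ring_scope.

Section ConicChords.
Variable F : fieldType.
Implicit Types (A M : 'M[F]_3) (u v w z : 'rV[F]_3) (a b c d : F * F).

(* Entries addressed by nat, so that [ring] sees each entry as a single atom whatever
   ordinal expression produced it. *)
Definition entry A (i j : nat) : F := A (inord i) (inord j).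

Lemma entryE A (i j : 'I_3) : A i j = entry A i j.
Proof. by rewrite /entry !inord_val. Qed.

Lemma coordE u (j : 'I_3) : u 0 j = coord u j.
Proof. by rewrite /coord inord_val. Qed.

Lemma row3P u v :
  coord u 0 = coord v 0 -> coord u 1 = coord v 1 -> coord u 2 = coord v 2 -> u = v.
Proof. by move=> e0 e1 e2; apply/rowP => -[[|[|[|//]]] k]; rewrite !coordE. Qed.

Lemma coordZ (k : F) u i : coord (k *: u) i = k * coord u i.
Proof. by rewrite /coord mxE. Qed.

Lemma coord_mulmx u A k : coord (u *m A) k =
  coord u 0 * entry A 0 k + coord u 1 * entry A 1 k + coord u 2 * entry A 2 k.
Proof.
by rewrite {1}/coord mxE !big_ord_recr big_ord0 /= add0r !coordE !entryE /entry !inord_val.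
Qed.

Lemma coord_cross0 u w :
  coord (cross u w) 0 = coord u 1 * coord w 2 - coord u 2 * coord w 1.
Proof. by rewrite {1}/coord mxE inordK. Qed.

Lemma coord_cross1 u w :
  coord (cross u w) 1 = coord u 2 * coord w 0 - coord u 0 * coord w 2.
Proof. by rewrite {1}/coord mxE inordK. Qed.

Lemma coord_cross2 u w :
  coord (cross u w) 2 = coord u 0 * coord w 1 - coord u 1 * coord w 0.
Proof. by rewrite {1}/coord mxE inordK. Qed.

Definition coord_crossE := (coord_cross0, coord_cross1, coord_cross2).

Lemma det_mx3 A : \det A =
  entry A 0 0 * (entry A 1 1 * entry A 2 2 - entry A 1 2 * entry A 2 1)
  - entry A 0 1 * (entry A 1 0 * entry A 2 2 - entry A 1 2 * entry A 2 0)
  + entry A 0 2 * (entry A 1 0 * entry A 2 1 - entry A 1 1 * entry A 2 0).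
Proof.
rewrite (expand_det_row _ 0) !big_ord_recr big_ord0 /= /cofactor.
rewrite !(expand_det_row _ 0) !big_ord_recr big_ord0 /= /cofactor.
by rewrite !det_mx11 !mxE ?big_ord0 !entryE /bump /=; ring.
Qed.

Lemma cofactor_mx3 A (i j : 'I_3) : cofactor A i j =
  entry A (i.+1 %% 3) (j.+1 %% 3) * entry A (i.+2 %% 3) (j.+2 %% 3)
  - entry A (i.+1 %% 3) (j.+2 %% 3) * entry A (i.+2 %% 3) (j.+1 %% 3).
Proof.
rewrite /cofactor (expand_det_row _ 0) !big_ord_recr big_ord0 /= /cofactor !det_mx11.
by case: i => [[|[|[|//]]] ?]; case: j => [[|[|[|//]]] ?];
  rewrite !mxE !entryE /bump /modn /=; ring.
Qed.

Lemma adj_adj_mx3 A : \adj (\adj A) = \det A *: A.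
Proof.
apply/matrixP => i j; rewrite [LHS]mxE cofactor_mx3 /entry !mxE det_mx3 entryE.
by case: i => [[|[|[|//]]] ?]; case: j => [[|[|[|//]]] ?];
  rewrite /modn /= !cofactor_mx3 !inordK //= /modn /=; ring.
Qed.

Lemma crossZ (k l : F) u w : cross (k *: u) (l *: w) = (k * l) *: cross u w.
Proof. by apply: row3P; rewrite !(coord_crossE, coordZ); ring. Qed.

Lemma cross_mulmx u w A : cross (u *m A) (w *m A) = cross u w *m (\adj A)^T.
Proof.
by apply: row3P; rewrite !(coord_crossE, coord_mulmx)
  /entry !mxE !cofactor_mx3 !inordK // /modn /= /entry; ring.
Qed.

Lemma meet_join_mulmx u v w z M :
  meet (join (u *m M) (v *m M)) (join (w *m M) (z *m M))
  = \det M *: (meet (join u v) (join w z) *m M).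
Proof.
by rewrite /meet /join !cross_mulmx trmx_adj trmxK adj_adj_mx3 scalemxAr.
Qed.

Definition triple u v w : F :=
  coord u 0 * (coord v 1 * coord w 2 - coord v 2 * coord w 1)
  - coord u 1 * (coord v 0 * coord w 2 - coord v 2 * coord w 0)
  + coord u 2 * (coord v 0 * coord w 1 - coord v 1 * coord w 0).

Lemma det_col_mx3 u v w : \det (col_mx u (col_mx v w)) = triple u v w.
Proof.
have inordE (k : nat) (i : 'I_(1 + (1 + 1))) : k = i -> inord k = i.
  by move->; rewrite inord_val.
have eu j : entry (col_mx u (col_mx v w)) 0 j = coord u j.
  by rewrite /entry (inordE 0 (lshift _ 0)) //; exact: col_mxEu.
have ev j : entry (col_mx u (col_mx v w)) 1 j = coord v j.
  rewrite /entry (inordE 1 (rshift 1 (lshift 1 0))) //.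
  exact: etrans (col_mxEd _ _ _ _) (col_mxEu _ _ _ _).
have ew j : entry (col_mx u (col_mx v w)) 2 j = coord w j.
  rewrite /entry (inordE 2 (rshift 1 (rshift 1 0))) //.
  exact: etrans (col_mxEd _ _ _ _) (col_mxEd _ _ _ _).
by rewrite det_mx3 !(eu, ev, ew).
Qed.

Lemma tripleZ (k l m : F) u v w :
  triple (k *: u) (l *: v) (m *: w) = k * l * m * triple u v w.
Proof. by rewrite /triple !coordZ; ring. Qed.

Lemma triple_mulmx u v w M :
  triple (u *m M) (v *m M) (w *m M) = triple u v w * \det M.
Proof. by rewrite -!det_col_mx3 -!mul_col_mx det_mulmx. Qed.

Lemma coord_veronese0 a : coord (veronese a) 0 = a.1 ^+ 2.
Proof. by rewrite /coord mxE inordK // expr0 mulr1. Qed.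

Lemma coord_veronese1 a : coord (veronese a) 1 = a.1 * a.2.
Proof. by rewrite /coord mxE inordK // !expr1. Qed.

Lemma coord_veronese2 a : coord (veronese a) 2 = a.2 ^+ 2.
Proof. by rewrite /coord mxE inordK // expr0 mul1r. Qed.

Definition coord_veroneseE := (coord_veronese0, coord_veronese1, coord_veronese2).

(* chord a b is the line through veronese a and veronese b: its dot product with
   veronese c is det2 c a * det2 c b. *)
Definition chord a b : 'rV[F]_3 :=
  \row_(i < 3) [:: a.2 * b.2; - (a.1 * b.2 + a.2 * b.1); a.1 * b.1]`_i.

Lemma coord_chord0 a b : coord (chord a b) 0 = a.2 * b.2.
Proof. by rewrite /coord mxE inordK. Qed.

Lemma coord_chord1 a b : coord (chord a b) 1 = - (a.1 * b.2 + a.2 * b.1).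
Proof. by rewrite /coord mxE inordK. Qed.

Lemma coord_chord2 a b : coord (chord a b) 2 = a.1 * b.1.
Proof. by rewrite /coord mxE inordK. Qed.

Definition coord_chordE := (coord_chord0, coord_chord1, coord_chord2).

Lemma join_veronese a b : join (veronese a) (veronese b) = det2 a b *: chord a b.
Proof.
by apply: row3P; rewrite /join !(coord_crossE, coordZ, coord_chordE)
  !coord_veroneseE /det2; ring.
Qed.

Lemma meet_join_conic_param M a b c d :
  meet (join (conic_param M a) (conic_param M b)) (join (conic_param M c) (conic_param M d))
  = (\det M * (det2 a b * det2 c d)) *: (meet (chord a b) (chord c d) *m M).
Proof.
by rewrite meet_join_mulmx !join_veronese /meet crossZ -scalemxAl scalerA.
Qed.

Lemma collinearE u v w : collinear u v w <-> triple u v w = 0.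
Proof. by rewrite /collinear det_col_mx3. Qed.

Lemma mulf_eq0_iff (k x : F) : k != 0 -> k * x = 0 <-> x = 0.
Proof. by move=> k0; split=> [/eqP|->]; rewrite ?mulr0 // mulf_eq0 (negbTE k0) => /eqP. Qed.

Lemma collinearZ (k l m : F) u v w : k != 0 -> l != 0 -> m != 0 ->
  collinear (k *: u) (l *: v) (m *: w) <-> collinear u v w.
Proof.
by move=> k0 l0 m0; rewrite !collinearE tripleZ; apply: mulf_eq0_iff; rewrite !mulf_neq0.
Qed.

Lemma collinear_mulmx u v w M : M \in unitmx ->
  collinear (u *m M) (v *m M) (w *m M) <-> collinear u v w.
Proof.
rewrite unitmxE unitfE => M0.
by rewrite !collinearE triple_mulmx mulrC; exact: mulf_eq0_iff.
Qed.

Lemma eqr_div_iff (x y z t : F) : y != 0 -> t != 0 ->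
  x / y = z / t <-> x * t - z * y = 0.
Proof. by move=> y0 t0; rewrite (rwP eqP) eqr_div // -subr_eq0; split=> /eqP. Qed.

Lemma divr_eq1_iff (x y : F) : y != 0 -> x / y = 1 <-> x - y = 0.
Proof.
by move=> y0; rewrite (rwP eqP) -(inj_eq (mulIf y0)) mul1r divfK // -subr_eq0; split=> /eqP.
Qed.

Lemma det2C a b : det2 a b = - det2 b a.
Proof. by rewrite /det2; ring. Qed.

Lemma det2_neq0C a b : det2 a b != 0 -> det2 b a != 0.
Proof. by rewrite det2C oppr_eq0. Qed.

Lemma multiratio4E a b c d :
  multiratio [:: a; b; c; d] = det2 a b * det2 c d / (det2 b c * det2 d a).
Proof. by rewrite /multiratio /= !big_ord_recr big_ord0 /= mul1r mulf_div. Qed.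

Lemma multiratio8E a1 a2 a3 a4 a5 a6 a7 a8 :
  multiratio [:: a1; a2; a3; a4; a5; a6; a7; a8]
  = det2 a1 a2 * det2 a3 a4 * det2 a5 a6 * det2 a7 a8
    / (det2 a2 a3 * det2 a4 a5 * det2 a6 a7 * det2 a8 a1).
Proof. by rewrite /multiratio /= !big_ord_recr big_ord0 /= mul1r !mulf_div. Qed.

Lemma triple_meet_chords_zigzag x1 x2 x3 x4 y1 y2 y3 y4 :
  triple (meet (chord x1 x2) (chord y1 y2)) (meet (chord x2 x3) (chord y2 y3))
         (meet (chord x3 x4) (chord y3 y4))
  = - (det2 x2 y2 * det2 x3 y3)
    * (det2 x1 y2 * det2 x3 y4 * (det2 x2 y3 * det2 x4 y1)
       - det2 y1 x2 * det2 y3 x4 * (det2 y2 x3 * det2 y4 x1)).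
Proof. by rewrite /triple /meet !(coord_crossE, coord_chordE) /det2; ring. Qed.

Lemma triple_meet_chords_wedge (y2 y1 u x1 x2 p v q : F * F) :
  triple (meet (chord x1 x2) (chord y1 y2)) (meet (chord u x1) (chord p v))
         (meet (chord u y1) (chord q v))
  = det2 u v * det2 x1 y1
    * (det2 p u * det2 q x2 * det2 y1 v * det2 x1 y2
       - det2 u q * det2 x2 y1 * det2 v x1 * det2 y2 p).
Proof. by rewrite /triple /meet !(coord_crossE, coord_chordE) /det2; ring. Qed.

Lemma collinear_chord_meets_zigzag x1 x2 x3 x4 y1 y2 y3 y4 :
  det2 x2 y2 != 0 -> det2 x3 y3 != 0 ->
  det2 y2 x3 != 0 -> det2 y4 x1 != 0 -> det2 x2 y3 != 0 -> det2 x4 y1 != 0 ->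
  collinear (meet (chord x1 x2) (chord y1 y2)) (meet (chord x2 x3) (chord y2 y3))
            (meet (chord x3 x4) (chord y3 y4))
  <-> multiratio [:: x1; y2; x3; y4] = multiratio [:: y1; x2; y3; x4].
Proof.
move=> *; rewrite collinearE triple_meet_chords_zigzag mulf_eq0_iff; last first.
  by rewrite oppr_eq0 mulf_neq0.
by rewrite !multiratio4E eqr_div_iff ?mulf_neq0.
Qed.

Lemma collinear_chord_meets_wedge (y2 y1 u x1 x2 p v q : F * F) :
  det2 u v != 0 -> det2 x1 y1 != 0 ->
  det2 u q != 0 -> det2 x2 y1 != 0 -> det2 v x1 != 0 -> det2 y2 p != 0 ->
  collinear (meet (chord x1 x2) (chord y1 y2)) (meet (chord u x1) (chord p v))
            (meet (chord u y1) (chord q v))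
  <-> multiratio [:: p; u; q; x2; y1; v; x1; y2] = 1.
Proof.
move=> *; rewrite collinearE triple_meet_chords_wedge mulf_eq0_iff ?mulf_neq0 //.
by rewrite multiratio8E divr_eq1_iff ?mulf_neq0.
Qed.

End ConicChords.

Theorem lemma1 (F : numFieldType) (M : 'M[F]_3) (hM : M \in unitmx) :
  let Pt := conic_param M in
  (forall x1 x2 x3 x4 y1 y2 y3 y4 : F * F,
     P1_distinct [:: x1; x2; x3; x4; y1; y2; y3; y4] ->
     let A1 := meet (join (Pt x1) (Pt x2)) (join (Pt y1) (Pt y2)) in
     let A2 := meet (join (Pt x2) (Pt x3)) (join (Pt y2) (Pt y3)) in
     let A3 := meet (join (Pt x3) (Pt x4)) (join (Pt y3) (Pt y4)) in
     collinear A1 A2 A3 <->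
     multiratio [:: x1; y2; x3; y4] = multiratio [:: y1; x2; y3; x4])
  /\
  (forall y2 y1 u x1 x2 p v q : F * F,
     P1_distinct [:: y2; y1; u; x1; x2; p; v; q] ->
     let A := meet (join (Pt x1) (Pt x2)) (join (Pt y1) (Pt y2)) in
     let B := meet (join (Pt u) (Pt x1)) (join (Pt p) (Pt v)) in
     let C := meet (join (Pt u) (Pt y1)) (join (Pt q) (Pt v)) in
     collinear A B C <->
     multiratio [:: p; u; q; x2; y1; v; x1; y2] = 1).
Proof.
have M0 : \det M != 0 by rewrite -unitfE -unitmxE.
split=> [x1 x2 x3 x4 y1 y2 y3 y4 | y2 y1 u x1 x2 p v q] H /=.
- move: (H 0 1 isT) (H 1 2 isT) (H 2 3 isT) (H 4 5 isT) (H 5 6 isT) (H 6 7 isT)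
    (H 1 5 isT) (H 2 6 isT) (det2_neq0C (H 2 5 isT)) (det2_neq0C (H 0 7 isT))
    (H 1 6 isT) (H 3 4 isT) => /= *.
  rewrite !meet_join_conic_param collinearZ ?mulf_neq0 // collinear_mulmx //.
  exact: collinear_chord_meets_zigzag.
- move: (H 3 4 isT) (det2_neq0C (H 0 1 isT)) (H 2 3 isT) (H 5 6 isT)
    (det2_neq0C (H 1 2 isT)) (det2_neq0C (H 6 7 isT))
    (H 2 6 isT) (det2_neq0C (H 1 3 isT)) (H 2 7 isT) (det2_neq0C (H 1 4 isT))
    (det2_neq0C (H 3 6 isT)) (H 0 5 isT) => /= *.
  rewrite !meet_join_conic_param collinearZ ?mulf_neq0 // collinear_mulmx //.
  exact: collinear_chord_meets_wedge.
Qed.
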